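(* For every integer $n \ge 9$ of the form $n = 5k + 4$ with $k$ a positive integer, we have $\mathbf{max\mbox{-}diam}(n, 2) \ge 4^{(n - 4)/5}$.
   Context: A partial DFA is a triple $\mathcal{A} = (Q, \Sigma, \delta)$ with $Q$ a finite set of states, $\Sigma$ a finite alphabet, and $\delta \colon Q \times \Sigma \rightharpoonup Q$ a partial transition function, extended to words in the usual way. Each word $w \in \Sigma^*$ expresses the partial transformation $q \mapsto \delta(q, w)$ of $Q$ (undefined where $\delta(q,w)$ is undefined). The depth of a partial transformation $f$ expressed by some word is the length of a shortest word expressing $f$. The diameter of $\mathcal{A}$ is the maximum depth over all partial transformations of $Q$ expressed by some word in $\mathcal{A}$ (equivalently, the smallest $\ell \ge 0$ such that every transformation expressed by a word is expressed by a word of length at most $\ell$). $\mathbf{max\mbox{-}diam}(n, m)$ denotes the maximum diameter over all partial DFAs with $n$ states and $m$ letters. *)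

From mathcomp Require Import all_boot.
From mathcomp Require Import boolp.

Set Implicit Arguments.
Unset Strict Implicit.
Unset Printing Implicit Defensive.

Definition pdfa (n m : nat) := {ffun 'I_n * 'I_m -> option 'I_n}.

Definition ptrans (n : nat) := {ffun 'I_n -> option 'I_n}.

Definition delta_word n m (A : pdfa n m) (q : 'I_n) (w : seq 'I_m) : option 'I_n :=
  foldl (fun oq a => if oq is Some p then A (p, a) else None) (Some q) w.

Definition expr n m (A : pdfa n m) (w : seq 'I_m) : ptrans n :=
  [ffun q => delta_word A q w].

Definition expressed_len n m (A : pdfa n m) (f : ptrans n) (l : nat) : bool :=
  [exists t : l.-tuple 'I_m, expr A t == f].

Definition expressed n m (A : pdfa n m) (f : ptrans n) : Prop :=
  exists w : seq 'I_m, expr A w = f.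

(* Depth: length of a shortest word expressing f (0 if f is not expressed). *)
Definition depth n m (A : pdfa n m) (f : ptrans n) : nat :=
  match pselect (exists l, expressed_len A f l) with
  | left h => ex_minn h
  | right _ => 0
  end.

Definition diameter n m (A : pdfa n m) : nat :=
  \max_(f : ptrans n | `[< expressed A f >]) depth A f.

Definition max_diam (n m : nat) : nat := \max_(A : pdfa n m) diameter A.

(* The automaton has the states 4 l + c for a level l <= k and a counter c < 4, plus
   H = 4 k + 4 (level k, counter 4) and Z = 4 k + 5 (level 0, counter 4).  Letter a
   rotates the levels cyclically, sending H to Z; letter b raises the counter at level k
   (4 k + 3 to H), resets Z to 0, fixes the middle levels and is undefined on the other
   states of level 0.  The k tokens 4 (k - t), t < k, always sit at pairwise distinct
   levels.  Weighting the counter of token t by 4 ^ t, a letter raises the potential by at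
   most 1: a b adding 4 ^ r at level k kills the token of weight 4 ^ (r - 1) at level 0
   unless it sits on Z, whose reset costs 4 * 4 ^ (r - 1).  The word witness k (k - 1)
   brings token k - 1 to H and the other tokens to counter 0, i.e. to potential 4 ^ k, so
   every word expressing the same partial transformation has length at least 4 ^ k. *)

From mathcomp Require Import all_boot.
From mathcomp Require Import boolp.
From mathcomp Require Import zify.

Set Implicit Arguments.
Unset Strict Implicit.
Unset Printing Implicit Defensive.

Lemma max_diam_ge n m (A : pdfa n m) (w : seq 'I_m) L :
  (forall w', expr A w' = expr A w -> L <= size w') -> L <= max_diam n m.
Proof.
move=> shortest; have ex : expressed A (expr A w) by exists w.
have : L <= depth A (expr A w).
  rewrite /depth; case: pselect => [h|[]]; last first.
    by exists (size w); apply/existsP; exists (in_tuple w).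
  by case: (ex_minnP h) => l /existsP [t /eqP tw] _; rewrite -(size_tuple t) shortest.
move/leq_trans; apply; apply: (leq_trans _ (leq_bigmax A)).
by rewrite /diameter; apply: (leq_bigmax_cond (F := depth A)); exact: asboolT.
Qed.

Definition step (k p x : nat) : option nat :=
  if x == 0 then
    if p < 4 * k.+1 then Some (if p < 4 * k then p + 4 else p - 4 * k)
    else if p == 4 * k.+1 then Some (4 * k.+1).+1 else None
  else if p < 4 then None
  else if p < 4 * k then Some p
  else if p < 4 * k.+1 then Some p.+1
  else if p == (4 * k.+1).+1 then Some 0 else None.

Definition level k p := if p < 4 * k.+1 then p %/ 4 else if p == 4 * k.+1 then k else 0.
Definition counter k p := if p < 4 * k.+1 then p %% 4 else 4.

Ltac case_innermost_if :=
  match goal with |- context [if ?c then _ else _] =>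
    lazymatch c with context [if _ then _ else _] => fail | _ =>
      let E := fresh "E" in case E: c; [ | move/negbT: E => E] end end.

Lemma step_a_inv k p p' : 0 < k -> p < 4 * k + 6 -> step k p 0 = Some p' ->
  [/\ p' < 4 * k + 6, level k p' = (if level k p == k then 0 else (level k p).+1)
    & counter k p' = counter k p].
Proof.
move=> k0 hp; unfold step, level, counter.
repeat case_innermost_if => //; case=> ?; subst p'; repeat case_innermost_if; split; lia.
Qed.

Lemma step_b_inv k p p' : 0 < k -> p < 4 * k + 6 -> step k p 1 = Some p' ->
  [/\ p' < 4 * k + 6, level k p' = level k p,
      level k p = 0 -> counter k p = 4 /\ counter k p' = 0,
      level k p = k -> counter k p < 4 /\ counter k p' = (counter k p).+1 &
      level k p <> 0 -> level k p <> k -> counter k p' = counter k p].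
Proof.
move=> k0 hp; unfold step, level, counter.
repeat case_innermost_if => //; case=> ?; subst p'; repeat case_innermost_if; split; lia.
Qed.

Lemma counter_mul4 k l : l <= k -> counter k (4 * l) = 0.
Proof. by move=> hl; rewrite /counter ifT ?modnMr //; lia. Qed.

Lemma counter_hold k : counter k (4 * k + 4) = 4.
Proof. by rewrite /counter ifF //; apply/negbTE; lia. Qed.

(* States outside 'I_n are cut off: for k = 1 and n = 9 this removes Z, which the
   witness for k = 1 never visits. *)
Definition trans n k p x : option nat :=
  if step k p x is Some r then (if r < n then Some r else None) else None.

Definition run n k p (w : seq 'I_2) : option nat :=
  foldl (fun o (x : 'I_2) => if o is Some q then trans n k q x else None) (Some p) w.

Lemma run_cat n k p u v :
  run n k p (u ++ v) = if run n k p u is Some q then run n k q v else None.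
Proof. by rewrite /run foldl_cat; case: (foldl _ _ u) => [q|] //; elim: v. Qed.

Lemma run_cons n k p x w :
  run n k p (x :: w) = if trans n k p x is Some q then run n k q w else None.
Proof. by rewrite -cat1s run_cat. Qed.

Lemma run_rcons n k p x w :
  run n k p (rcons w x) = if run n k p w is Some q then trans n k q x else None.
Proof. by rewrite -cats1 run_cat. Qed.

Lemma run_seq n k p q u v : run n k p u = Some q -> run n k p (u ++ v) = run n k q v.
Proof. by move=> h; rewrite run_cat h. Qed.

Lemma run_cons_trans n k p q (x : 'I_2) w :
  trans n k p x = Some q -> run n k p (x :: w) = run n k q w.
Proof. by move=> h; rewrite run_cons h. Qed.

Definition counter_pdfa n k : pdfa n 2 :=
  [ffun px : 'I_n * 'I_2 => if step k px.1 px.2 is Some r then insub r else None].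

Lemma delta_word_counter_pdfa n k (q : 'I_n) w :
  omap val (delta_word (counter_pdfa n k) q w) = run n k q w.
Proof.
rewrite /delta_word /run -[Some (q : nat)]/(omap val (Some q)).
elim: w (Some q) => [|x w IH] o //=; rewrite IH; congr (foldl _ _ w).
case: o => [p|] //=; rewrite ffunE /trans /=; case: step => [r|] //=.
by case: insubP => [r' -> <-|/negbTE ->].
Qed.

Definition a : 'I_2 := ord0.
Definition b : 'I_2 := ord_max.

Lemma letter_cases (x : 'I_2) : x = a \/ x = b.
Proof. by case: x => [[|[|//]]] ?; [left|right]; apply: val_inj. Qed.

Definition token k t := 4 * (k - t).
Definition token_level k r t := if t < r then r - t - 1 else r + k - t.
Definition counter_of k (o : option nat) := if o is Some p then counter k p else 0.
Definition potential n k w := \sum_(t < k) counter_of k (run n k (token k t) w) * 4 ^ t.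

(* After r rotations (mod k + 1), token t is at level token_level k r t. *)
Definition token_config n k r w := forall t, t < k ->
  exists p, [/\ run n k (token k t) w = Some p, p < 4 * k + 6 & level k p = token_level k r t].

Lemma token_level_rot k r t : r <= k -> t < k ->
  token_level k (if r == k then 0 else r.+1) t =
  (if token_level k r t == k then 0 else (token_level k r t).+1).
Proof. by move=> hr ht; rewrite /token_level; repeat case_innermost_if; lia. Qed.

Lemma token_level_eq0 k r t : r <= k -> t < k -> (token_level k r t == 0) = (t.+1 == r).
Proof. by move=> hr ht; rewrite /token_level; case: ifP => ?; apply/eqP/eqP; lia. Qed.

Lemma token_level_eqk k r t : r <= k -> t < k -> (token_level k r t == k) = (t == r).
Proof. by move=> hr ht; rewrite /token_level; case: ifP => ?; apply/eqP/eqP; lia. Qed.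

Lemma sum_indicator_shift k r :
  \sum_(t < k) ((t : nat) == r) * 4 ^ t <= (r == 0) + \sum_(t < k) ((t : nat).+1 == r) * 4 ^ t.+1.
Proof.
apply: (@leq_trans (\sum_(t < k.+1) ((t : nat) == r) * 4 ^ t)).
  by rewrite big_ord_recr leq_addr.
by rewrite big_ord_recl /= expn0 muln1 eq_sym.
Qed.

Lemma token_config_nil n k : token_config n k 0 [::].
Proof.
move=> t ht; exists (token k t); split => //; rewrite /token /token_level /level; last first.
  by repeat case_innermost_if; lia.
lia.
Qed.

Lemma token_config_step n k r w x t : token_config n k r w -> t < k ->
  run n k (token k t) (rcons w x) <> None ->
  exists p p', [/\ run n k (token k t) w = Some p, p < 4 * k + 6, level k p = token_level k r t,
                   step k p x = Some p' & run n k (token k t) (rcons w x) = Some p'].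
Proof.
move=> cfg ht; have [p [wp hp lp]] := cfg t ht.
rewrite run_rcons wp /trans; case E: step => [p'|] //; case: ifP => // _ _.
by exists p, p'.
Qed.

Section PotentialStep.
Variables (n k r : nat) (w : seq 'I_2).
Hypotheses (k0 : 0 < k) (hr : r <= k) (cfg : token_config n k r w).

Lemma token_config_rcons_a :
  (forall t, t < k -> run n k (token k t) (rcons w a) <> None) ->
  token_config n k (if r == k then 0 else r.+1) (rcons w a) /\
  potential n k (rcons w a) = potential n k w.
Proof.
move=> alive; split.
  move=> t ht; have [p [p' [_ hp lp sp wp']]] := token_config_step cfg ht (alive t ht).
  have [hp' lp' _] := step_a_inv k0 hp sp.
  by exists p'; split => //; rewrite lp' lp token_level_rot.
apply: eq_bigr => t _.
have [p [p' [wp hp _ sp wp']]] := token_config_step cfg (ltn_ord t) (alive t (ltn_ord t)).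
have [_ _ cp'] := step_a_inv k0 hp sp.
by rewrite wp wp' /= cp'.
Qed.

Lemma token_config_rcons_b :
  (forall t, t < k -> run n k (token k t) (rcons w b) <> None) ->
  token_config n k r (rcons w b) /\ potential n k (rcons w b) <= (potential n k w).+1.
Proof.
move=> alive; split.
  move=> t ht; have [p [p' [_ hp lp sp wp']]] := token_config_step cfg ht (alive t ht).
  have [hp' lp' _ _ _] := step_b_inv k0 hp sp.
  by exists p'; split => //; rewrite lp'.
suff: potential n k (rcons w b) + \sum_(t < k) ((t : nat).+1 == r) * 4 ^ t.+1 <=
      potential n k w + \sum_(t < k) ((t : nat) == r) * 4 ^ t.
  by have := sum_indicator_shift k r; lia.
rewrite /potential -!big_split; apply: leq_sum => t _.
have [p [p' [wp hp lp sp wp']]] := token_config_step cfg (ltn_ord t) (alive t (ltn_ord t)).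
have [_ _ bottom top middle] := step_b_inv k0 hp sp.
rewrite wp wp' /= -(token_level_eq0 hr (ltn_ord t)) -(token_level_eqk hr (ltn_ord t)) -lp.
have [l0|l0] := eqVneq (level k p) 0.
  have [-> ->] := bottom l0; rewrite l0 (_ : (0 == k) = false); last by apply/negbTE; lia.
  by rewrite expnS; lia.
have [lk|lk] := eqVneq (level k p) k.
  by have [_ ->] := top lk; lia.
by rewrite middle //; apply/eqP.
Qed.
End PotentialStep.

Lemma potential_le_size n k w : 0 < k ->
  (forall t, t < k -> run n k (token k t) w <> None) -> potential n k w <= size w.
Proof.
move=> k0 alive.
suff [r _ []] : exists2 r, r <= k & token_config n k r w /\ potential n k w <= size w by [].
elim/last_ind: w alive => [|w x IH] alive.
  exists 0 => //; split; first exact: token_config_nil.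
  by rewrite /potential big1 // => t _; rewrite /= /token counter_mul4 ?mul0n //; lia.
have alive_w t : t < k -> run n k (token k t) w <> None.
  by move=> ht; have := alive t ht; rewrite run_rcons; case: run.
have [r hr [cfg pot]] := IH alive_w; rewrite size_rcons.
move: alive; have [->|->] := letter_cases x => alive.
  have [cfg' ->] := token_config_rcons_a k0 hr cfg alive.
  by exists (if r == k then 0 else r.+1); [case: eqP; lia | split => //; lia].
have [cfg' pot'] := token_config_rcons_b k0 hr cfg alive.
by exists r => //; split => //; lia.
Qed.

Ltac arith := try (unfold token; repeat case_innermost_if; lia).

Ltac solve_trans := move=> *; subst; rewrite /trans /step /=;
  repeat (case_innermost_if; rewrite /=); first [by [] | congr Some; lia | exfalso; lia].

Section Transitions.
Variables (n k : nat).
Hypothesis hn : 4 * k + 4 <= n.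

Lemma trans_a l v p q : l <= k -> v < 4 -> p = 4 * l + v ->
  q = 4 * (if l < k then l.+1 else 0) + v -> trans n k p a = Some q.
Proof. by solve_trans. Qed.

Lemma trans_b_mid l v p : 0 < l < k -> v < 4 -> p = 4 * l + v -> trans n k p b = Some p.
Proof. by solve_trans. Qed.

Lemma trans_b_top v p q : 0 < k -> v < 4 -> (4 * k + v).+1 < n -> p = 4 * k + v -> q = p.+1 ->
  trans n k p b = Some q.
Proof. by solve_trans. Qed.

Lemma trans_a_hold p q :
  4 * k + 6 <= n -> p = 4 * k + 4 -> q = 4 * k + 5 -> trans n k p a = Some q.
Proof. by solve_trans. Qed.

Lemma trans_b_reset p q :
  0 < k -> 4 * k + 6 <= n -> p = 4 * k + 5 -> q = 0 -> trans n k p b = Some q.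
Proof. by solve_trans. Qed.

Lemma run_nseq_a_mod l v m : l <= k -> v < 4 ->
  run n k (4 * l + v) (nseq m a) = Some (4 * ((l + m) %% k.+1) + v).
Proof.
move=> hl hv; elim: m l hl => [|m IH] l hl; first by rewrite addn0 modn_small.
rewrite /= (run_cons_trans _ (trans_a hl hv erefl erefl)); case: ltnP => hlk.
  by rewrite IH // addSnnS.
have -> : l = k by lia.
by rewrite (IH 0) // addnS -addSn modnDl.
Qed.

Lemma run_nseq_a l v m p q : l <= k -> v < 4 -> l + m <= k + k.+1 -> p = 4 * l + v ->
  q = 4 * (if l + m <= k then l + m else l + m - k.+1) + v -> run n k p (nseq m a) = Some q.
Proof.
move=> hl hv hm -> ->; rewrite run_nseq_a_mod //; case: leqP => hlm.
  by rewrite modn_small.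
by rewrite -{1}(subnK hlm) modnDr modn_small //; lia.
Qed.

Lemma run_nseq_b_mid l v m :
  0 < l < k -> v < 4 -> run n k (4 * l + v) (nseq m b) = Some (4 * l + v).
Proof.
by move=> hl hv; elim: m => //= m IH; rewrite (run_cons_trans _ (trans_b_mid hl hv erefl)).
Qed.

Lemma run_nseq_b_top v m : 0 < k -> v + m <= 4 -> 4 * k + v + m < n ->
  run n k (4 * k + v) (nseq m b) = Some (4 * k + v + m).
Proof.
move=> k0; elim: m v => [|m IH] v hvm hn'; first by rewrite addn0.
rewrite /= (run_cons_trans _ (trans_b_top k0 _ _ erefl erefl)); try lia.
by rewrite -addnS IH; [congr Some | |]; lia.
Qed.
End Transitions.

(* With u = witness k i' ++ [:: a; b] and v = nseq (k - i') a ++ u, the word v fixes the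
   state reached after u by every token except token i'.+1, whose counter it raises by one;
   three copies of v thus carry token i'.+1 from counter 1 to H. *)
Fixpoint witness k i : seq 'I_2 :=
  if i is i'.+1 then
    let u := witness k i' ++ [:: a; b] in
    let v := nseq (k - i') a ++ u in
    u ++ v ++ v ++ v
  else nseq 4 b.

Definition witness_spec n k i :=
  [/\ forall t, t < i -> run n k (token k t) (witness k i) = Some (4 * (i - t.+1)),
      run n k (token k i) (witness k i) = Some (4 * k + 4) &
      forall t v, i < t < k -> v < 4 ->
        run n k (token k t + v) (witness k i) = Some (4 * (k - t + i) + v)].

Lemma witness_spec0 n k : 0 < k -> 4 * k + 5 <= n -> witness_spec n k 0.
Proof.
move=> k0 hn; split => //.
  by rewrite /token subn0 -[4 * k]addn0 run_nseq_b_top //; lia.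
by move=> t v ht hv; rewrite /token addn0 run_nseq_b_mid //; lia.
Qed.

Section WitnessStep.
Variables (n k i : nat).
Hypotheses (k0 : 0 < k) (hik : i.+1 < k) (hn : 4 * k + 6 <= n) (spec : witness_spec n k i).

Let u := witness k i ++ [:: a; b].
Let v := nseq (k - i) a ++ u.

Lemma round_done t : t < i -> run n k (token k t) u = Some (4 * (i - t)).
Proof.
move=> ht; have [done _ _] := spec; rewrite /u (run_seq _ (done t ht)).
rewrite (run_cons_trans _ (@trans_a n k _ (i - t.+1) 0 _ (4 * (i - t)) _ _ _ _)); arith.
by rewrite (run_cons_trans _ (@trans_b_mid n k _ (i - t) 0 _ _ _ _)); arith.
Qed.

Lemma round_hold : run n k (token k i) u = Some 0.
Proof.
have [_ hold _] := spec; rewrite /u (run_seq _ hold).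
rewrite (run_cons_trans _ (@trans_a_hold n k _ _ (4 * k + 5) _ _ _)); arith.
by rewrite (run_cons_trans _ (@trans_b_reset n k _ _ 0 _ _ _ _)); arith.
Qed.

Lemma round_top c : c < 4 -> run n k (token k i.+1 + c) u = Some (4 * k + c.+1).
Proof.
move=> hc; have [_ _ idle] := spec; rewrite /u (run_seq _ (idle _ _ _ hc)); arith.
rewrite (run_cons_trans _ (@trans_a n k _ (k - 1) c _ (4 * k + c) _ _ _ _)); arith.
by rewrite (run_cons_trans _ (@trans_b_top n k _ c _ (4 * k + c.+1) _ _ _ _ _)); arith.
Qed.

Lemma round_idle t c : i.+1 < t < k -> c < 4 ->
  run n k (token k t + c) u = Some (4 * (k - t + i.+1) + c).
Proof.
move=> ht hc; have [_ _ idle] := spec; rewrite /u (run_seq _ (idle _ _ _ hc)); arith.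
rewrite (run_cons_trans _ (@trans_a n k _ (k - t + i) c _ (4 * (k - t + i.+1) + c) _ _ _ _)); arith.
by rewrite (run_cons_trans _ (@trans_b_mid n k _ (k - t + i.+1) c _ _ _ _)); arith.
Qed.

Lemma loop_done t : t < i -> run n k (4 * (i - t)) v = Some (4 * (i - t)).
Proof.
move=> ht.
rewrite /v (run_seq _ (@run_nseq_a n k _ (i - t) 0 (k - i) _ (token k t) _ _ _ _ _)); arith.
exact: round_done.
Qed.

Lemma loop_hold : run n k 0 v = Some 0.
Proof.
rewrite /v (run_seq _ (@run_nseq_a n k _ 0 0 (k - i) _ (token k i) _ _ _ _ _)); arith.
exact: round_hold.
Qed.

Lemma loop_top c : c < 3 -> run n k (4 * k + c.+1) v = Some (4 * k + c.+2).
Proof.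
move=> hc.
rewrite /v (run_seq _ (@run_nseq_a n k _ k c.+1 (k - i) _ (token k i.+1 + c.+1) _ _ _ _ _)); arith.
exact: round_top.
Qed.

Lemma loop_idle t c : i.+1 < t < k -> c < 4 ->
  run n k (4 * (k - t + i.+1) + c) v = Some (4 * (k - t + i.+1) + c).
Proof.
move=> ht hc.
rewrite /v (run_seq _ (@run_nseq_a n k _ (k - t + i.+1) c (k - i) _ (token k t + c)
  _ _ _ _ _)); arith.
exact: round_idle.
Qed.

Lemma witness_specS : witness_spec n k i.+1.
Proof.
have wS : witness k i.+1 = u ++ v ++ v ++ v by [].
rewrite /witness_spec wS.
split.
- move=> t; rewrite ltnS leq_eqVlt => /orP [/eqP ->|ht].
    by rewrite (run_seq _ round_hold) !(run_seq _ loop_hold) loop_hold subnn.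
  rewrite (run_seq _ (round_done ht)) !(run_seq _ (loop_done ht)) loop_done //.
- have top0 := round_top (ltn0Sn 3); rewrite addn0 in top0.
  rewrite (run_seq _ top0) (run_seq _ (loop_top _)) //.
  by rewrite (run_seq _ (loop_top _)) // loop_top.
- move=> t c ht hc; rewrite (run_seq _ (round_idle ht hc)) !(run_seq _ (loop_idle ht hc)).
  by rewrite loop_idle //; congr Some; lia.
Qed.
End WitnessStep.

Lemma witness_specP n k i : 0 < k -> i < k -> 4 * k + 5 <= n -> (0 < i -> 4 * k + 6 <= n) ->
  witness_spec n k i.
Proof.
move=> k0; elim: i => [|i IH] hi hn hn'; first exact: witness_spec0.
by apply: witness_specS => //; [exact: hn' | apply: IH => //; lia].
Qed.

Lemma potential_witness n k :
  0 < k -> witness_spec n k k.-1 -> potential n k (witness k k.-1) = 4 ^ k.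
Proof.
case: k => [//|k] _ [done hold _]; rewrite /= in done hold.
rewrite /potential big_ord_recr /= hold /= counter_hold expnS big1 // => t _.
by rewrite done //= counter_mul4 //; lia.
Qed.

Lemma witness_shortest n k w : 0 < k -> 4 * k < n -> witness_spec n k k.-1 ->
  expr (counter_pdfa n k) w = expr (counter_pdfa n k) (witness k k.-1) -> 4 ^ k <= size w.
Proof.
move=> k0 hn spec ew; have [done hold _] := spec.
have same_run t : t < k -> run n k (token k t) w = run n k (token k t) (witness k k.-1).
  move=> ht; have ltn : token k t < n by rewrite /token; lia.
  have := congr1 (fun f : ptrans n => f (Ordinal ltn)) ew; rewrite /= !ffunE => e.
  by rewrite -!(delta_word_counter_pdfa k (Ordinal ltn)) e.
have <- : potential n k w = 4 ^ k.
  by rewrite -(potential_witness k0 spec); apply: eq_bigr => t _; rewrite same_run.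
apply: potential_le_size => // t ht; rewrite same_run //.
by case: (ltnP t k.-1) => htk; [rewrite done | rewrite (_ : t = k.-1) ?hold //; lia].
Qed.

Theorem corollary1 (n k : nat) :
  0 < k -> n = 5 * k + 4 -> 4 ^ k <= max_diam n 2.
Proof.
move=> k0 ->; have spec : witness_spec (5 * k + 4) k k.-1 by apply: witness_specP; lia.
apply: (@max_diam_ge _ _ (counter_pdfa _ k) (witness k k.-1)) => w.
by apply: witness_shortest => //; lia.
Qed.
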